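(* Let $\Sigma^2\subset\mathbb{R}^2$ be open and let $\psi=(x,\phi):\Sigma^2\to\mathbb{R}^2\times\mathbb{R}$ be an indefinite improper affine sphere with Blaschke normal $\xi=(0,0,1)$, where $x:\Sigma^2\to\mathbb{R}^2$, $\phi:\Sigma^2\to\mathbb{R}$; write its conormal map as $\nu=(n,1)$ with $n:\Sigma^2\to\mathbb{R}^2$. Define $\tilde L_\psi:\Sigma^2\to\widetilde{\mathbb{C}}^2$ by $\tilde L_\psi:=x+jn$, and identify $\widetilde{\mathbb{C}}^2$ with $\mathbb{R}^4$ via $(z_1,z_2)=(y_0+jy_1,\,y_2+jy_3)\leftrightarrow(y_0,y_1,y_2,y_3)$. Then \[ \tilde L_\psi^*(dy_0\wedge dy_1+dy_2\wedge dy_3)=0\quad\text{and}\quad \tilde L_\psi^*(dy_0\wedge dy_2+dy_1\wedge dy_3)=0 . \]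
   Context: Para-complex numbers: $\widetilde{\mathbb{C}}=\{a+jb: a,b\in\mathbb{R}\}$ with $j^2=1$. An improper affine sphere is an immersion $\psi$ into affine $3$-space whose Blaschke (affine) normal $\xi$ has vanishing shape operator (hence is constant; here normalized to $\xi=(0,0,1)$); it is indefinite if its affine metric is indefinite. The conormal map $\nu$ is the map into $(\mathbb{R}^3)^*\cong\mathbb{R}^3$ with $\nu(d\psi)=0$ and $\nu(\xi)=1$, so $\nu=(n,1)$ for some $n:\Sigma^2\to\mathbb{R}^2$; the affine metric equals $-\langle dx,dn\rangle$. *)

From Stdlib Require Import Reals.
From Coquelicot Require Import Coquelicot.
Open Scope R_scope.

Definition pt := (R * R)%type.

Definition pu (f : pt -> R) (p : pt) : R := Derive (fun t => f (t, snd p)) (fst p).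
Definition pv (f : pt -> R) (p : pt) : R := Derive (fun t => f (fst p, t)) (snd p).
Definition pd (i : nat) (f : pt -> R) : pt -> R :=
  match i with O => pu f | _ => pv f end.

Fixpoint Ck (k : nat) (Dom : pt -> Prop) (f : pt -> R) : Prop :=
  match k with
  | O => forall p, Dom p -> continuous f p
  | Datatypes.S k' =>
      (forall p, Dom p -> continuous f p /\
         ex_derive (fun t => f (t, snd p)) (fst p) /\
         ex_derive (fun t => f (fst p, t)) (snd p))
      /\ Ck k' Dom (pu f) /\ Ck k' Dom (pv f)
  end.

Definition smooth_on (Dom : pt -> Prop) (f : pt -> R) : Prop := forall k, Ck k Dom f.

(** Vectors of R^3 (and covectors of (R^3)^* ≅ R^3). *)
Definition vec3 := (R * R * R)%type.
Definition comp (c : nat) (w : vec3) : R :=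
  match c with O => fst (fst w) | 1%nat => snd (fst w) | _ => snd w end.
Definition det3 (a b c : vec3) : R :=
  comp 0 a * (comp 1 b * comp 2 c - comp 2 b * comp 1 c)
  - comp 1 a * (comp 0 b * comp 2 c - comp 2 b * comp 0 c)
  + comp 2 a * (comp 0 b * comp 1 c - comp 1 b * comp 0 c).
Definition dot3 (a b : vec3) : R :=
  comp 0 a * comp 0 b + comp 1 a * comp 1 b + comp 2 a * comp 2 b.

Definition dvec (i : nat) (F : pt -> vec3) (p : pt) : vec3 :=
  (pd i (fun q => comp 0 (F q)) p, pd i (fun q => comp 1 (F q)) p,
   pd i (fun q => comp 2 (F q)) p).

(** Volume element theta(X,Y) = det(psi_* X, psi_* Y, xi) on the frame (d_u, d_v). *)
Definition theta (psi xi : pt -> vec3) (p : pt) : R :=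
  det3 (dvec 0 psi p) (dvec 1 psi p) (xi p).

Definition transversal (Dom : pt -> Prop) (psi xi : pt -> vec3) : Prop :=
  forall p, Dom p -> theta psi xi p <> 0.

(** Gauss formula  D_{d_i} psi_* d_j = psi_*(nabla_{d_i} d_j) + h(d_i,d_j) xi :
    h i j is the affine fundamental form (affine metric) induced by xi. *)
Definition gauss_formula (Dom : pt -> Prop) (psi xi : pt -> vec3)
    (h : nat -> nat -> pt -> R) : Prop :=
  forall p, Dom p -> forall i j, (i < 2)%nat -> (j < 2)%nat ->
    exists g0 g1, forall c, (c < 3)%nat ->
      pd i (pd j (fun q => comp c (psi q))) p =
      g0 * pd 0 (fun q => comp c (psi q)) p + g1 * pd 1 (fun q => comp c (psi q)) p
      + h i j p * comp c (xi p).

Definition det2 (h : nat -> nat -> pt -> R) (p : pt) : R :=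
  h 0%nat 0%nat p * h 1%nat 1%nat p - h 0%nat 1%nat p * h 1%nat 0%nat p.

(** Weingarten formula D_X xi = - psi_*(S X) + tau(X) xi with tau = 0,
    i.e. D xi is tangent. *)
Definition tau_zero (Dom : pt -> Prop) (psi xi : pt -> vec3) : Prop :=
  forall p, Dom p -> forall i, (i < 2)%nat ->
    exists s0 s1, forall c, (c < 3)%nat ->
      pd i (fun q => comp c (xi q)) p =
      s0 * pd 0 (fun q => comp c (psi q)) p + s1 * pd 1 (fun q => comp c (psi q)) p.

(** Blaschke (affine) normal: transversal, tau = 0 (nabla theta = 0), and the
    volume condition theta = omega_h, i.e. |det h(d_i,d_j)| = theta(d_u,d_v)^2. *)
Definition is_blaschke_normal (Dom : pt -> Prop) (psi xi : pt -> vec3) : Prop :=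
  transversal Dom psi xi /\ tau_zero Dom psi xi /\
  (forall h, gauss_formula Dom psi xi h ->
     forall p, Dom p -> Rabs (det2 h p) = (theta psi xi p) ^ 2).

(** Improper: the shape operator vanishes (together with tau = 0: D xi = 0). *)
Definition shape_operator_zero (Dom : pt -> Prop) (xi : pt -> vec3) : Prop :=
  forall p, Dom p -> forall i c, (i < 2)%nat -> (c < 3)%nat ->
    pd i (fun q => comp c (xi q)) p = 0.

(** Indefinite: the affine metric is indefinite (det < 0 in dimension 2). *)
Definition indefinite (Dom : pt -> Prop) (psi xi : pt -> vec3) : Prop :=
  forall h, gauss_formula Dom psi xi h -> forall p, Dom p -> det2 h p < 0.

Definition is_conormal (Dom : pt -> Prop) (psi xi nu : pt -> vec3) : Prop :=
  forall p, Dom p ->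
    dot3 (nu p) (dvec 0 psi p) = 0 /\ dot3 (nu p) (dvec 1 psi p) = 0 /\
    dot3 (nu p) (xi p) = 1.

(** Para-complex numbers a + j b, j^2 = 1. *)
Record paraC := PC { pc_re : R ; pc_im : R }.
Definition pc_mul (z w : paraC) : paraC :=
  PC (pc_re z * pc_re w + pc_im z * pc_im w) (pc_re z * pc_im w + pc_im z * pc_re w).

Definition Ltilde (x n : pt -> R * R) (p : pt) : paraC * paraC :=
  (PC (fst (x p)) (fst (n p)), PC (snd (x p)) (snd (n p))).

Definition ycoord (a : nat) (z : paraC * paraC) : R :=
  match a with
  | O => pc_re (fst z) | 1%nat => pc_im (fst z)
  | 2%nat => pc_re (snd z) | _ => pc_im (snd z)
  end.

(** Coefficient of du ∧ dv in F^*(dy_a ∧ dy_b). *)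
Definition pullback_wedge (F : pt -> paraC * paraC) (a b : nat) (p : pt) : R :=
  pu (fun q => ycoord a (F q)) p * pv (fun q => ycoord b (F q)) p
  - pv (fun q => ycoord a (F q)) p * pu (fun q => ycoord b (F q)) p.

(* The conormal equations say d phi = - <n, dx>; since d(d phi) = 0,
   differentiating once more gives dx1 ^ dn1 + dx2 ^ dn2 = 0. The affine metric is
   h = - <dn, dx>, so det h = det(Dn) det(Dx), while the Blaschke volume condition gives
   |det h| = theta^2 = det(Dx)^2. Indefiniteness fixes the sign: det(Dn) = - det(Dx),
   i.e. dx1 ^ dx2 + dn1 ^ dn2 = 0. *)

From Stdlib Require Import Reals Lra Lia.
From Coquelicot Require Import Coquelicot.
Open Scope R_scope.

Definition along (i : nat) (p : pt) (t : R) : pt :=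
  match i with O => (t, snd p) | _ => (fst p, t) end.

Definition coord (i : nat) (p : pt) : R :=
  match i with O => fst p | _ => snd p end.

Lemma pd_along i f p : pd i f p = Derive (fun t => f (along i p t)) (coord i p).
Proof. destruct i; reflexivity. Qed.

Lemma along_coord i p : along i p (coord i p) = p.
Proof. destruct p as [a b]; destruct i; reflexivity. Qed.

Lemma locally_along (D : pt -> Prop) i p :
  open D -> D p -> locally (coord i p) (fun t => D (along i p t)).
Proof.
  intros HD Hp.
  assert (H2d : locally_2d (fun u v => D (u, v)) (fst p) (snd p)).
  { apply locally_2d_locally. destruct p as [a b].
    eapply filter_imp; [|exact (HD _ Hp)]. intros [u v] Huv; exact Huv. }
  destruct i; simpl.
  - exact (locally_2d_1d_const_y _ _ _ H2d).
  - exact (locally_2d_1d_const_x _ _ _ H2d).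
Qed.

Lemma smooth_on_pd D f i : smooth_on D f -> smooth_on D (pd i f).
Proof. intros Hf k. destruct i; apply (Hf (S k)). Qed.

Lemma smooth_on_ex_derive_along D f i p :
  smooth_on D f -> D p -> ex_derive (fun t => f (along i p t)) (coord i p).
Proof.
  intros Hf Hp. destruct (proj1 (Hf 1%nat) p Hp) as [_ [Hu Hv]].
  destruct i; assumption.
Qed.

Lemma pd_ext_on D i f g p :
  open D -> D p -> (forall q, D q -> f q = g q) -> pd i f p = pd i g p.
Proof.
  intros HD Hp Hfg. rewrite !pd_along. apply Derive_ext_loc.
  eapply filter_imp; [|exact (locally_along D i p HD Hp)].
  intros t Ht; exact (Hfg _ Ht).
Qed.

Lemma pd_opp_pairing D i a1 a2 b1 b2 p : D p ->
  smooth_on D a1 -> smooth_on D a2 -> smooth_on D b1 -> smooth_on D b2 ->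
  pd i (fun q => - (a1 q * b1 q + a2 q * b2 q)) p =
  - (pd i a1 p * b1 p + a1 p * pd i b1 p + (pd i a2 p * b2 p + a2 p * pd i b2 p)).
Proof.
  intros Hp Ha1 Ha2 Hb1 Hb2. rewrite !pd_along.
  pose proof (smooth_on_ex_derive_along D a1 i p Ha1 Hp) as Ea1.
  pose proof (smooth_on_ex_derive_along D a2 i p Ha2 Hp) as Ea2.
  pose proof (smooth_on_ex_derive_along D b1 i p Hb1 Hp) as Eb1.
  pose proof (smooth_on_ex_derive_along D b2 i p Hb2 Hp) as Eb2.
  rewrite Derive_opp, Derive_plus, !Derive_mult, !along_coord by auto using ex_derive_mult.
  reflexivity.
Qed.

Lemma pd_comm D f p : open D -> smooth_on D f -> D p -> pu (pv f) p = pv (pu f) p.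
Proof.
  intros HD Hf Hp.
  assert (Hcont : forall g, smooth_on D g ->
            continuity_2d_pt (fun u v => g (u, v)) (fst p) (snd p)).
  { intros g Hg eps. apply locally_2d_locally. destruct p as [a b].
    eapply filter_imp; [|exact (Hg 0%nat (a, b) Hp _ (locally_ball _ eps))].
    intros [u v] H; exact H. }
  destruct p as [a b]. unfold pu, pv. simpl.
  apply (Schwarz (fun u v => f (u, v)) a b).
  - apply locally_2d_locally. eapply filter_imp; [|exact (HD _ Hp)].
    intros [u v] Huv. simpl.
    destruct (proj1 (Hf 1%nat) _ Huv) as [_ [Eu Ev]].
    destruct (proj1 (smooth_on_pd D f 1 Hf 1%nat) _ Huv) as [_ [Evu _]].
    destruct (proj1 (smooth_on_pd D f 0 Hf 1%nat) _ Huv) as [_ [_ Euv]].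
    auto.
  - exact (Hcont (pu (pv f)) (smooth_on_pd D _ 0 (smooth_on_pd D f 1 Hf))).
  - exact (Hcont (pv (pu f)) (smooth_on_pd D _ 1 (smooth_on_pd D f 0 Hf))).
Qed.

Lemma solve_linear2 a0 a1 b0 b1 e f : a0 * b1 - a1 * b0 <> 0 ->
  exists g0 g1, e = g0 * a0 + g1 * a1 /\ f = g0 * b0 + g1 * b1.
Proof.
  intros Hdet.
  exists ((e * b1 - f * a1) / (a0 * b1 - a1 * b0)),
         ((a0 * f - b0 * e) / (a0 * b1 - a1 * b0)).
  split; field; exact Hdet.
Qed.

Definition jac (f g : pt -> R) (p : pt) : R := pu f p * pv g p - pv f p * pu g p.

Section AffineGraph.

Variables (D : pt -> Prop) (X1 X2 phi N1 N2 : pt -> R).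
Hypothesis D_open : open D.
Hypotheses (X1_smooth : smooth_on D X1) (X2_smooth : smooth_on D X2)
  (phi_smooth : smooth_on D phi) (N1_smooth : smooth_on D N1) (N2_smooth : smooth_on D N2).

Let psi : pt -> vec3 := fun p => (X1 p, X2 p, phi p).
Let xi : pt -> vec3 := fun _ => (0, 0, 1).

Hypothesis conormal : is_conormal D psi xi (fun p => (N1 p, N2 p, 1)).

Lemma theta_graph p : theta psi xi p = jac X1 X2 p.
Proof.
  unfold theta, det3, dvec, jac, psi, xi. simpl.
  change (fun q : pt => X1 q) with X1; change (fun q : pt => X2 q) with X2.
  ring.
Qed.

Lemma pd_phi_conormal j q : (j < 2)%nat -> D q ->
  pd j phi q = - (N1 q * pd j X1 q + N2 q * pd j X2 q).
Proof.
  intros Hj Hq. destruct (conormal q Hq) as [Hu [Hv _]].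
  unfold dot3, dvec in Hu, Hv. simpl in Hu, Hv.
  change (fun q : pt => X1 q) with X1 in Hu, Hv.
  change (fun q : pt => X2 q) with X2 in Hu, Hv.
  change (fun q : pt => phi q) with phi in Hu, Hv.
  destruct j as [|[|j]]; [simpl; lra | simpl; lra | lia].
Qed.

Lemma pd2_phi i j q : (j < 2)%nat -> D q ->
  pd i (pd j phi) q =
  - (pd i N1 q * pd j X1 q + N1 q * pd i (pd j X1) q
     + (pd i N2 q * pd j X2 q + N2 q * pd i (pd j X2) q)).
Proof.
  intros Hj Hq.
  rewrite (pd_ext_on D i _ _ q D_open Hq (fun q' Hq' => pd_phi_conormal j q' Hj Hq')).
  apply (pd_opp_pairing D); auto using smooth_on_pd.
Qed.

Lemma dx_wedge_dn p : D p -> jac X1 N1 p + jac X2 N2 p = 0.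
Proof.
  intros Hp. unfold jac.
  pose proof (pd2_phi 0 1 p ltac:(lia) Hp) as Huv.
  pose proof (pd2_phi 1 0 p ltac:(lia) Hp) as Hvu.
  simpl in Huv, Hvu.
  rewrite (pd_comm D X1 p), (pd_comm D X2 p), (pd_comm D phi p) in Huv; auto.
  lra.
Qed.

Definition affine_metric (i j : nat) (q : pt) : R :=
  - (pd i N1 q * pd j X1 q + pd i N2 q * pd j X2 q).

Lemma det2_affine_metric p : det2 affine_metric p = jac N1 N2 p * jac X1 X2 p.
Proof. unfold det2, affine_metric, jac. simpl. ring. Qed.

(* The Christoffel symbols are read off the two horizontal components; the vertical
   component then leaves exactly [- <dn, dx>] in front of [xi]. *)
Lemma gauss_formula_affine_metric :
  transversal D psi xi -> gauss_formula D psi xi affine_metric.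
Proof.
  intros Htr q Hq i j Hi Hj.
  assert (Hjac : jac X1 X2 q <> 0) by (rewrite <- theta_graph; exact (Htr q Hq)).
  destruct (solve_linear2 (pu X1 q) (pv X1 q) (pu X2 q) (pv X2 q)
              (pd i (pd j X1) q) (pd i (pd j X2) q) Hjac) as [g0 [g1 [E1 E2]]].
  exists g0, g1. intros c Hc.
  destruct c as [|[|[|c]]]; [| | | lia]; simpl;
    try change (fun q : pt => X1 q) with X1; try change (fun q : pt => X2 q) with X2;
    try change (fun q : pt => phi q) with phi.
  - rewrite E1. ring.
  - rewrite E2. ring.
  - rewrite (pd2_phi i j q Hj Hq), E1, E2.
    pose proof (pd_phi_conormal 0 q ltac:(lia) Hq) as Hu.
    pose proof (pd_phi_conormal 1 q ltac:(lia) Hq) as Hv.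
    simpl in Hu, Hv. rewrite Hu, Hv.
    unfold affine_metric. ring.
Qed.

Lemma dx_wedge_dx_dn_wedge_dn p : D p ->
  is_blaschke_normal D psi xi -> indefinite D psi xi ->
  jac X1 X2 p + jac N1 N2 p = 0.
Proof.
  intros Hp [Htr [_ Hvol]] Hind.
  pose proof (gauss_formula_affine_metric Htr) as Hg.
  pose proof (Hind _ Hg p Hp) as Hneg.
  pose proof (Hvol _ Hg p Hp) as Habs.
  assert (Hjac : jac X1 X2 p <> 0) by (rewrite <- theta_graph; exact (Htr p Hp)).
  rewrite theta_graph, Rabs_left, det2_affine_metric in Habs by exact Hneg.
  apply (Rmult_eq_reg_l (jac X1 X2 p)); [nra | exact Hjac].
Qed.

End AffineGraph.

Theorem mainTheorem2 (Sigma : pt -> Prop) (x : pt -> R * R) (phi : pt -> R)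
    (n : pt -> R * R) :
  open Sigma ->
  smooth_on Sigma (fun p => fst (x p)) ->
  smooth_on Sigma (fun p => snd (x p)) ->
  smooth_on Sigma phi ->
  let psi : pt -> vec3 := fun p => (fst (x p), snd (x p), phi p) in
  let xi : pt -> vec3 := fun _ => (0, 0, 1) in
  is_blaschke_normal Sigma psi xi ->
  shape_operator_zero Sigma xi ->
  indefinite Sigma psi xi ->
  smooth_on Sigma (fun p => fst (n p)) ->
  smooth_on Sigma (fun p => snd (n p)) ->
  is_conormal Sigma psi xi (fun p => (fst (n p), snd (n p), 1)) ->
  forall p, Sigma p ->
    pullback_wedge (Ltilde x n) 0 1 p + pullback_wedge (Ltilde x n) 2 3 p = 0 /\
    pullback_wedge (Ltilde x n) 0 2 p + pullback_wedge (Ltilde x n) 1 3 p = 0.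
Proof.
  intros HSigma Hx1 Hx2 Hphi psi xi Hblaschke _ Hindef Hn1 Hn2 Hconormal p Hp.
  split.
  - exact (dx_wedge_dn Sigma _ _ phi _ _ HSigma Hx1 Hx2 Hphi Hn1 Hn2 Hconormal p Hp).
  - exact (dx_wedge_dx_dn_wedge_dn Sigma _ _ phi _ _ HSigma Hx1 Hx2 Hn1 Hn2
             Hconormal p Hp Hblaschke Hindef).
Qed.
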